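(* Let $\iota:\emptyset\to\{\bullet\}$. Then, in $\mathrm{Top}$, $\{\iota\}^{lrr}$ is the class of continuous maps admitting a continuous section.
   Context: For continuous maps $f:A\to B$, $g:C\to D$, $f\pitchfork g$ means: for all continuous $t:A\to C$, $b:B\to D$ with $g\circ t=b\circ f$ there is continuous $d:B\to C$ with $d\circ f=t$, $g\circ d=b$. For a class $P$, $P^l=\{f: f\pitchfork g\ \forall g\in P\}$, $P^r=\{g: f\pitchfork g\ \forall f\in P\}$, and $P^{lrr}=((P^l)^r)^r$. *)

From mathcomp Require Import all_boot all_classical topology.

Set Implicit Arguments.
Unset Strict Implicit.
Unset Printing Implicit Defensive.

Record arr := Arr {
  dom : topologicalType;
  cod : topologicalType;
  fn : dom -> cod;
  fn_cont : continuous fn }.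
Arguments fn : clear implicits.
Arguments dom : clear implicits.
Arguments cod : clear implicits.

Definition mclass := arr -> Prop.

Definition lifts (f g : arr) : Prop :=
  forall (t : dom f -> dom g) (b : cod f -> cod g),
    continuous t -> continuous b ->
    fn g \o t = b \o fn f ->
    exists d : cod f -> dom g,
      continuous d /\ d \o fn f = t /\ fn g \o d = b.

Definition lorth (P : mclass) : mclass := fun f => forall g, P g -> lifts f g.
Definition rorth (P : mclass) : mclass := fun g => forall f, P f -> lifts f g.

Definition lrr (P : mclass) : mclass := rorth (rorth (lorth P)).

Definition empty_space : topologicalType := discrete_topology void.
Definition point_space : topologicalType := discrete_topology unit.

Definition iota_fun : empty_space -> point_space := fun x => of_void unit x.

Lemma iota_cont : continuous iota_fun.
Proof. by move=> x; case: x. Qed.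

Definition iota_arr : arr := @Arr empty_space point_space iota_fun iota_cont.

Definition single (h : arr) : mclass := fun g => g = h.

Definition has_cont_section (g : arr) : Prop :=
  exists s : cod g -> dom g, continuous s /\ fn g \o s = id.

From mathcomp Require Import all_boot all_classical topology.

(* A map [f] in [{iota}^lr] with nonempty domain lifts against itself, as it
   lifts vacuously against [iota]; hence it is a homeomorphism and lifts
   against every map.  A map with empty domain lifts against every [g] that is
   split epi.  Conversely every [0 -> Y] lies in [{iota}^lr], and lifting [g]
   against [0 -> cod g] produces a section of [g]. *)

Lemma of_void_continuous (Y : topologicalType) :
  continuous (fun x : empty_space => @of_void Y x).
Proof. by case. Qed.

Definition void_arr (Y : topologicalType) : arr :=
  @Arr empty_space Y _ (@of_void_continuous Y).

Definition is_homeo (f : arr) : Prop :=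
  exists r : cod f -> dom f,
    [/\ continuous r, r \o fn f = id & fn f \o r = id].

Lemma homeo_lifts (f g : arr) : is_homeo f -> lifts f g.
Proof.
move=> [r [cr rf fr]] t b ct cb gtbf.
exists (t \o r); split; first by move=> y; apply: continuous_comp; [exact: cr | exact: ct].
by split; [rewrite -compA rf | rewrite compA gtbf -compA fr].
Qed.

Lemma lifts_self_homeo (f : arr) : lifts f f -> is_homeo f.
Proof.
move=> ff.
have [r [cr [rf fr]]] := ff id id (fun _ => @cvg_id _ _) (fun _ => @cvg_id _ _) erefl.
by exists r.
Qed.

Lemma lifts_to_empty_dom (f h : arr) :
  inhabited (dom f) -> (dom h -> False) -> lifts f h.
Proof. by move=> [x] hE t *; case: (hE (t x)). Qed.

Lemma lifts_from_empty_dom (f g : arr) :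
  (dom f -> False) -> has_cont_section g -> lifts f g.
Proof.
move=> fE [s [cs gs]] t b ct cb _.
exists (s \o b); split; first by move=> y; apply: continuous_comp; [exact: cb | exact: cs].
split; first by apply: boolp.funext => x; case: (fE x).
by rewrite compA gs.
Qed.

(* Lifting [k] against [iota] along the constant bottom map yields a map
   [cod k -> 0], which is the required diagonal. *)
Lemma void_arr_rorth_lorth (P : mclass) (Y : topologicalType) :
  P iota_arr -> rorth (lorth P) (void_arr Y).
Proof.
move=> Piota k kP t b ct cb _.
have cst : continuous (fun _ : cod k => (tt : point_space)) by move=> y; exact: cvg_cst.
have sq : fn iota_arr \o t = (fun _ : cod k => (tt : point_space)) \o fn k.
  by apply: boolp.funext => x; case: (t x).
have [d [cd [dk _]]] := kP _ Piota t _ ct cst sq.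
by exists d; split=> //; split=> //; apply: boolp.funext => y; case: (d y).
Qed.

Lemma lifts_void_arr_section (g : arr) :
  lifts (void_arr (cod g)) g -> has_cont_section g.
Proof.
move=> vg.
have [s [cs [_ gs]]] := vg (fun x : empty_space => @of_void (dom g) x) id
  (@of_void_continuous _) (fun _ => @cvg_id _ _) (boolp.funext (fun x : empty_space => match x with end)).
by exists s.
Qed.

Theorem mainTheorem11 (g : arr) : lrr (single iota_arr) g <-> has_cont_section g.
Proof.
split=> [g_lrr | g_split f f_lr].
  by apply/lifts_void_arr_section/g_lrr/void_arr_rorth_lorth.
have [domf | domfE] := boolp.pselect (inhabited (dom f)).
  apply/homeo_lifts/lifts_self_homeo/f_lr => h ->.
  exact: lifts_to_empty_dom.
by apply: lifts_from_empty_dom => // x; apply: domfE; exists.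
Qed.
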